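(* Let $A=\{a_n\}_{n\in\mathbb Z}\subset\mathbb R$ be an almost periodic set of density $d$ such that $a_n\le a_{n+1}$ for all $n\in\mathbb Z$. Then $$a_n=n/d+\phi(n),\qquad n\in\mathbb Z,$$ with an almost periodic mapping $\phi:\mathbb Z\to\mathbb R$.
   Context: A discrete locally finite multiset $A=\{a_n\}_{n\in\mathbb Z}\subset\mathbb R$ (a point may occur several times in the sequence) is called almost periodic if for every $\varepsilon>0$ the set $$E_\varepsilon=\{\tau\in\mathbb R:\ \exists\text{ a bijection }\sigma:\mathbb Z\to\mathbb Z\text{ with }\sup_n|a_n+\tau-a_{\sigma(n)}|<\varepsilon\}$$ is relatively dense, i.e. there is $L_\varepsilon>0$ with $E_\varepsilon\cap(x,x+L_\varepsilon)\ne\emptyset$ for every $x\in\mathbb R$. For such $A$ there exists the density $d=\lim_{l(I)\to\infty}\#(A\cap I)/l(I)>0$, the limit taken over half-intervals $I$ with length $l(I)\to\infty$, where $\#(A\cap I)$ counts points with multiplicity. A mapping $\phi:\mathbb Z\to\mathbb R$ is almost periodic if for every $\varepsilon>0$ the set of integers $h$ with $\sup_{n\in\mathbb Z}|\phi(n+h)-\phi(n)|<\varepsilon$ is relatively dense in $\mathbb Z$ (meets every interval of some fixed length $L_\varepsilon$). *)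

From Stdlib Require Import Reals Lra Lia ZArith List.
Open Scope R_scope.

Definition bijZ (sigma : Z -> Z) : Prop :=
  exists sinv : Z -> Z, (forall n, sinv (sigma n) = n) /\ (forall n, sigma (sinv n) = n).

Definition locally_finite (a : Z -> R) : Prop :=
  forall x y : R, exists N : Z, forall n : Z, x <= a n <= y -> (Z.abs n <= N)%Z.

Definition sup_lt (f : Z -> R) (eps : R) : Prop :=
  exists c : R, c < eps /\ forall n : Z, Rabs (f n) <= c.

Definition almost_period (a : Z -> R) (eps tau : R) : Prop :=
  exists sigma : Z -> Z, bijZ sigma /\ sup_lt (fun n => a n + tau - a (sigma n)) eps.

Definition almost_periodic_set (a : Z -> R) : Prop :=
  locally_finite a /\
  forall eps : R, 0 < eps ->
    exists L : R, 0 < L /\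
      forall x : R, exists tau : R, x < tau < x + L /\ almost_period a eps tau.

(* #(A ∩ [alpha, beta)) = k, counted with multiplicity (number of indices) *)
Definition count_in (a : Z -> R) (alpha beta : R) (k : nat) : Prop :=
  exists l : list Z, NoDup l /\ length l = k /\
    forall n : Z, In n l <-> (alpha <= a n /\ a n < beta).

Definition has_density (a : Z -> R) (d : R) : Prop :=
  forall eps : R, 0 < eps ->
    exists L0 : R, forall (alpha beta : R) (k : nat),
      beta - alpha > L0 -> count_in a alpha beta k ->
      Rabs (INR k / (beta - alpha) - d) < eps.

Definition almost_periodic_map (phi : Z -> R) : Prop :=
  forall eps : R, 0 < eps ->
    exists L : Z, (0 < L)%Z /\
      forall m : Z, exists h : Z, (m <= h < m + L)%Z /\
        sup_lt (fun n => phi (n + h)%Z - phi n) eps.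

From Stdlib Require Import Reals ZArith.
From Stdlib Require Import Lra Lia List FinFun IndefiniteDescription Classical.
Open Scope R_scope.

(* Let [i x] be the least index [m] with [x <= a m], so that [i y - i x]
   counts the points of the set in [[x, y)].  The bijection attached to an
   e-almost period [tau] shows that, up to O(e) in the argument, [i] increases
   by one and the same integer [h] over every interval [[x, x + tau]]; the
   density then gives [h ~ d tau], and [a (n + h) ~ a n + tau] for all [n].
   Hence [phi n = a n - n / d] is moved by less than O(e) by the shift [h],
   and these shifts are relatively dense because the almost periods are. *)

Lemma Rabs_le_between (x e : R) : Rabs x <= e -> - e <= x <= e.
Proof.
  intro Hx. pose proof (Rle_abs x). pose proof (Rle_abs (- x)).
  rewrite Rabs_Ropp in *. lra.
Qed.

Lemma Z_bounded_below_least (P : Z -> Prop) (B : Z) :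
  (forall m, P m -> (B <= m)%Z) -> (exists m, P m) ->
  exists m0, P m0 /\ forall m, P m -> (m0 <= m)%Z.
Proof.
  intros HB [m Pm].
  destruct (dec_inh_nat_subset_has_unique_least_element
              (fun k => P (B + Z.of_nat k)%Z)) as [k [[Pk Hk] _]].
  - intro k; apply classic.
  - exists (Z.to_nat (m - B)).
    specialize (HB m Pm). now replace (B + Z.of_nat (Z.to_nat (m - B)))%Z with m by lia.
  - exists (B + Z.of_nat k)%Z. split; [exact Pk|].
    intros m' Pm'. specialize (HB m' Pm').
    assert (Hk' : (k <= Z.to_nat (m' - B))%nat).
    { apply Hk. now replace (B + Z.of_nat (Z.to_nat (m' - B)))%Z with m' by lia. }
    lia.
Qed.

Lemma Z_bounded_above_greatest (P : Z -> Prop) (B : Z) :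
  (forall m, P m -> (m <= B)%Z) -> (exists m, P m) ->
  exists m0, P m0 /\ forall m, P m -> (m <= m0)%Z.
Proof.
  intros HB [m Pm].
  destruct (Z_bounded_below_least (fun k => P (- k)%Z) (- B)) as [k [Pk Hk]].
  - intros k Pk. specialize (HB _ Pk). lia.
  - exists (- m)%Z. now rewrite Z.opp_involutive.
  - exists (- k)%Z. split; [exact Pk|].
    intros m' Pm'. enough (k <= - m')%Z by lia.
    apply Hk. now rewrite Z.opp_involutive.
Qed.

Definition Zrange (p : Z) (n : nat) : list Z :=
  map (fun k => (p + Z.of_nat k)%Z) (seq 0 n).

Lemma In_Zrange p n m : In m (Zrange p n) <-> (p <= m < p + Z.of_nat n)%Z.
Proof.
  unfold Zrange. rewrite in_map_iff. split.
  - intros [k [<- Hk]]. apply in_seq in Hk. lia.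
  - intros H. exists (Z.to_nat (m - p)). split; [lia|]. apply in_seq. lia.
Qed.

Lemma NoDup_Zrange p n : NoDup (Zrange p n).
Proof. apply Injective_map_NoDup; [intros x y H; lia | apply seq_NoDup]. Qed.

Lemma length_Zrange p n : length (Zrange p n) = n.
Proof. unfold Zrange. now rewrite length_map, length_seq. Qed.

Lemma injective_Zinterval_length_le (f : Z -> Z) (p q r s : Z) :
  Injective f -> (r <= s)%Z ->
  (forall m, (p <= m < q)%Z -> (r <= f m < s)%Z) -> (q - p <= s - r)%Z.
Proof.
  intros Hf Hrs Hmaps.
  destruct (Z_le_gt_dec q p) as [Hqp | Hpq]; [lia|].
  enough (Z.to_nat (q - p) <= Z.to_nat (s - r))%nat by lia.
  rewrite <- (length_Zrange p (Z.to_nat (q - p))), <- (length_map f),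
    <- (length_Zrange r (Z.to_nat (s - r))).
  apply NoDup_incl_length.
  - apply Injective_map_NoDup; [exact Hf | apply NoDup_Zrange].
  - intros y Hy. apply in_map_iff in Hy as [m [<- Hm]].
    apply In_Zrange in Hm. apply In_Zrange. specialize (Hmaps m). lia.
Qed.

Lemma le_of_le_succ (a : Z -> R) :
  (forall n, a n <= a (n + 1)%Z) -> forall n m, (n <= m)%Z -> a n <= a m.
Proof.
  intros Hstep n. apply Z.le_ind.
  - intros x y ->; reflexivity.
  - apply Rle_refl.
  - intros m _ Hm. rewrite <- Z.add_1_r. eapply Rle_trans; [exact Hm | apply Hstep].
Qed.

Lemma locally_finite_unbounded (a : Z -> R) :
  locally_finite a -> (forall n m, (n <= m)%Z -> a n <= a m) ->
  forall x, (exists m, x <= a m) /\ (exists m, a m < x).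
Proof.
  intros Hlf Hmono x. split; apply NNPP; intro Hnone.
  - destruct (Hlf (a 0%Z) x) as [N HN].
    assert (Hbig : (Z.abs (Z.abs N + 1) <= N)%Z).
    { apply HN. split; [apply Hmono; lia|].
      apply Rnot_lt_le. intro Hlt. apply Hnone. exists (Z.abs N + 1)%Z. lra. }
    lia.
  - destruct (Hlf x (a 0%Z)) as [N HN].
    assert (Hbig : (Z.abs (- (Z.abs N + 1)) <= N)%Z).
    { apply HN. split; [|apply Hmono; lia].
      apply Rnot_lt_le. intro Hlt. apply Hnone. eexists; exact Hlt. }
    lia.
Qed.

Definition lower_index (a : Z -> R) (i : R -> Z) : Prop :=
  forall x m, x <= a m <-> (i x <= m)%Z.

Lemma lower_index_exists (a : Z -> R) :
  locally_finite a -> (forall n, a n <= a (n + 1)%Z) -> exists i, lower_index a i.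
Proof.
  intros Hlf Hstep. pose proof (le_of_le_succ a Hstep) as Hmono.
  apply (functional_choice (fun x k => forall m, x <= a m <-> (k <= m)%Z)).
  intro x. destruct (locally_finite_unbounded a Hlf Hmono x) as [Habove [m0 Hm0]].
  destruct (Z_bounded_below_least (fun m => x <= a m) m0) as [k [Hk Hleast]].
  - intros m Hm. destruct (Z_le_gt_dec m0 m); [assumption|].
    assert (a m <= a m0) by (apply Hmono; lia). lra.
  - exact Habove.
  - exists k. intro m. split; [apply Hleast|].
    intro Hkm. eapply Rle_trans; [exact Hk | apply Hmono, Hkm].
Qed.

Lemma almost_period_injections (a : Z -> R) (e tau : R) :
  almost_period a e tau ->
  exists f g : Z -> Z, Injective f /\ Injective g /\
    (forall m, Rabs (a (f m) - a m - tau) <= e) /\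
    (forall m, Rabs (a (g m) - a m + tau) <= e).
Proof.
  intros [sigma [[sinv [Hinv1 Hinv2]] [c [Hce Hc]]]].
  exists sigma, sinv. repeat split.
  - intros u v Huv. now rewrite <- (Hinv1 u), Huv, Hinv1.
  - intros u v Huv. now rewrite <- (Hinv2 u), Huv, Hinv2.
  - intro m. specialize (Hc m).
    replace (a (sigma m) - a m - tau) with (- (a m + tau - a (sigma m))) by ring.
    rewrite Rabs_Ropp. lra.
  - intro m. specialize (Hc (sinv m)). rewrite Hinv2 in Hc.
    replace (a (sinv m) - a m + tau) with (a (sinv m) + tau - a m) by ring. lra.
Qed.

Section LowerIndex.

Variables (a : Z -> R) (i : R -> Z).
Hypothesis Hi : lower_index a i.

Lemma lower_index_le (x y : R) : x <= y -> (i x <= i y)%Z.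
Proof. intros Hxy. apply Hi. eapply Rle_trans; [exact Hxy|]. apply Hi. lia. Qed.

Lemma lower_index_point (m : Z) : (i (a m) <= m)%Z.
Proof. apply Hi, Rle_refl. Qed.

Lemma lt_lower_index (x : R) (m : Z) : (m < i x)%Z <-> a m < x.
Proof.
  split; intro H.
  - apply Rnot_le_lt. intro Hle. apply Hi in Hle. lia.
  - apply Z.nle_gt. intro Hle. apply Hi in Hle. lra.
Qed.

Lemma lower_index_monotone (n m : Z) : (n <= m)%Z -> a n <= a m.
Proof. intro Hnm. apply Hi. pose proof (lower_index_point n). lia. Qed.

Lemma count_in_lower_index (x y : R) :
  x <= y -> count_in a x y (Z.to_nat (i y - i x)).
Proof.
  intros Hxy. pose proof (lower_index_le x y Hxy).
  exists (Zrange (i x) (Z.to_nat (i y - i x))).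
  split; [apply NoDup_Zrange|]. split; [apply length_Zrange|].
  intro n. rewrite In_Zrange, Z2Nat.id, (Hi x n), <- (lt_lower_index y n) by lia.
  lia.
Qed.

(* [f] sends the indices of the points in [[x, y)] injectively to indices of
   points in [[x + t - e, y + t + e)]. *)
Lemma lower_index_gap_le_shift (f : Z -> Z) (t e : R) :
  Injective f -> (forall m, Rabs (a (f m) - a m - t) <= e) ->
  forall x y, x <= y -> (i y - i x <= i (y + t + e) - i (x + t - e))%Z.
Proof.
  intros Hf Hclose x y Hxy.
  assert (He : 0 <= e) by (eapply Rle_trans; [apply Rabs_pos | apply (Hclose 0%Z)]).
  apply (injective_Zinterval_length_le f); [exact Hf | apply lower_index_le; lra|].
  intros m Hm. pose proof (Rabs_le_between _ _ (Hclose m)).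
  assert (x <= a m) by (apply Hi; lia).
  assert (a m < y) by (apply lt_lower_index; lia).
  split.
  - apply Hi. lra.
  - apply lt_lower_index. lra.
Qed.

Lemma lower_index_shift (f g : Z -> Z) (tau e : R) :
  Injective f -> Injective g ->
  (forall m, Rabs (a (f m) - a m - tau) <= e) ->
  (forall m, Rabs (a (g m) - a m + tau) <= e) ->
  exists h, forall x, (i (x + tau - e) <= i x + h <= i (x + tau + 5 * e))%Z.
Proof.
  intros Hf Hg Hfclose Hgclose.
  assert (He : 0 <= e) by (eapply Rle_trans; [apply Rabs_pos | apply (Hfclose 0%Z)]).
  assert (Hgclose' : forall m, Rabs (a (g m) - a m - - tau) <= e).
  { intro m. replace (a (g m) - a m - - tau) with (a (g m) - a m + tau) by ring. apply Hgclose. }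
  pose proof (lower_index_gap_le_shift f tau e Hf Hfclose) as Hfgap.
  pose proof (lower_index_gap_le_shift g (- tau) e Hg Hgclose') as Hggap.
  (* Either [f] (for [v <= z]) or [g] (for [z <= v - 2e]) compares the
     increment of [i] over [[v, v + tau - e]] with the one over [[z, z + tau + e]]. *)
  assert (Hcompare : forall v z, v <= z \/ z <= v - 2 * e ->
    (i (v + tau - e) - i v <= i (z + tau + e) - i z)%Z).
  { intros v z [Hvz | Hzv].
    - specialize (Hfgap v z Hvz). lia.
    - specialize (Hggap (z + tau + e) (v + tau - e) ltac:(lra)).
      replace (v + tau - e + - tau + e) with v in Hggap by ring.
      replace (z + tau + e + - tau - e) with z in Hggap by ring. lia. }
  assert (Hbound : forall v w,
    (i (v + tau - e) - i v <= i (w + tau + 3 * e) - i (w - 2 * e))%Z).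
  { intros v w. destruct (Rle_lt_dec v (w + 2 * e)) as [Hv | Hv].
    - specialize (Hcompare v (w + 2 * e) (or_introl Hv)).
      replace (w + 2 * e + tau + e) with (w + tau + 3 * e) in Hcompare by ring.
      pose proof (lower_index_le (w - 2 * e) (w + 2 * e) ltac:(lra)). lia.
    - assert (Hwv : w <= v - 2 * e) by lra.
      specialize (Hcompare v w (or_intror Hwv)).
      pose proof (lower_index_le (w + tau + e) (w + tau + 3 * e) ltac:(lra)).
      pose proof (lower_index_le (w - 2 * e) w ltac:(lra)). lia. }
  destruct (Z_bounded_above_greatest (fun k => exists v, i (v + tau - e) - i v = k)%Z
              (i (0 + tau + 3 * e) - i (0 - 2 * e))%Z) as [h [[v0 Hv0] Hmax]].
  - intros k [v <-]. apply Hbound.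
  - eexists; exists 0; reflexivity.
  - exists h. intro x. split.
    + enough (i (x + tau - e) - i x <= h)%Z by lia. apply Hmax. now exists x.
    + specialize (Hbound v0 (x + 2 * e)).
      replace (x + 2 * e + tau + 3 * e) with (x + tau + 5 * e) in Hbound by ring.
      replace (x + 2 * e - 2 * e) with x in Hbound by ring. lia.
Qed.

Lemma lower_index_shift_points (tau e : R) (h : Z) :
  0 < e -> (forall x, (i (x + tau - e) <= i x + h <= i (x + tau + 5 * e))%Z) ->
  forall n, a n + tau - e <= a (n + h)%Z < a n + tau + 6 * e.
Proof.
  intros He Hh n. split.
  - apply Hi. pose proof (Hh (a n)). pose proof (lower_index_point n). lia.
  - apply lt_lower_index.
    assert (Hn : (n < i (a n + e))%Z) by (apply lt_lower_index; lra).
    specialize (Hh (a n + e)).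
    replace (a n + e + tau + 5 * e) with (a n + tau + 6 * e) in Hh by ring. lia.
Qed.

Variable d : R.
Hypothesis Hd : has_density a d.

Lemma lower_index_density (l eps : R) : 0 < l -> 0 < eps ->
  exists k : nat, 0 < INR k * l /\ forall x,
    Rabs (IZR (i (x + INR k * l) - i x) - d * (INR k * l)) < eps * (INR k * l).
Proof.
  intros Hl Heps. destruct (Hd eps Heps) as [L0 HL0].
  destruct (INR_archimed l (Rmax L0 0) Hl) as [k Hk].
  pose proof (Rmax_l L0 0). pose proof (Rmax_r L0 0).
  exists k. set (T := INR k * l) in *. split; [lra|]. intro x.
  assert (Hx : x <= x + T) by lra.
  specialize (HL0 x (x + T) _ ltac:(lra) (count_in_lower_index _ _ Hx)).
  pose proof (lower_index_le _ _ Hx).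
  rewrite INR_IZR_INZ, Z2Nat.id in HL0 by lia.
  replace (x + T - x) with T in HL0 by ring.
  replace (IZR (i (x + T) - i x) - d * T) with ((IZR (i (x + T) - i x) / T - d) * T)
    by (field; lra).
  rewrite Rabs_mult, (Rabs_right T) by lra.
  apply Rmult_lt_compat_r; lra.
Qed.

Lemma le_density_of_count_ge (l c : R) : 0 < l ->
  (forall (k : nat) x, INR k * c <= IZR (i (x + INR k * l) - i x)) -> c <= d * l.
Proof.
  intros Hl Hcount. apply Rnot_lt_le. intro Hlt.
  destruct (lower_index_density l ((c - d * l) / l) Hl) as [k [Hkl Hk]].
  { apply Rdiv_lt_0_compat; lra. }
  specialize (Hk 0). specialize (Hcount k 0).
  apply Rabs_def2 in Hk as [Hk _].
  replace ((c - d * l) / l * (INR k * l)) with (INR k * c - d * (INR k * l)) in Hk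
    by (field; lra).
  lra.
Qed.

Lemma density_le_of_count_le (l c : R) : 0 < l ->
  (forall (k : nat) x, IZR (i (x + INR k * l) - i x) <= INR k * c) -> d * l <= c.
Proof.
  intros Hl Hcount. apply Rnot_lt_le. intro Hlt.
  destruct (lower_index_density l ((d * l - c) / l) Hl) as [k [Hkl Hk]].
  { apply Rdiv_lt_0_compat; lra. }
  specialize (Hk 0). specialize (Hcount k 0).
  apply Rabs_def2 in Hk as [_ Hk].
  replace ((d * l - c) / l * (INR k * l)) with (d * (INR k * l) - INR k * c) in Hk
    by (field; lra).
  lra.
Qed.

Lemma increment_ge_iter (s : R) (h : Z) :
  (forall x, (h <= i (x + s) - i x)%Z) ->
  forall (k : nat) x, (Z.of_nat k * h <= i (x + INR k * s) - i x)%Z.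
Proof.
  intros Hh k. induction k as [|k IH]; intro x.
  - replace (x + INR 0 * s) with x by (simpl; ring). lia.
  - specialize (IH x). specialize (Hh (x + INR k * s)).
    replace (x + INR (S k) * s) with (x + INR k * s + s) by (rewrite S_INR; ring). lia.
Qed.

Lemma increment_ge_le_density (s : R) (h : Z) :
  (forall x, (h <= i (x + s) - i x)%Z) -> IZR h <= d * s.
Proof.
  intros Hh. pose proof (increment_ge_iter s h Hh) as Hiter.
  destruct (Rtotal_order s 0) as [Hs | [-> | Hs]].
  - enough (Hneg : d * - s <= - IZR h) by (rewrite <- Ropp_mult_distr_r in Hneg; lra).
    apply (density_le_of_count_le); [lra|]. intros k x.
    specialize (Hiter k (x + INR k * - s)).
    replace (x + INR k * - s + INR k * s) with x in Hiter by ring.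
    replace (INR k * - IZR h) with (IZR (- (Z.of_nat k * h)))
      by (rewrite opp_IZR, mult_IZR, <- INR_IZR_INZ; ring).
    apply IZR_le. lia.
  - specialize (Hh 0). rewrite Rplus_0_r in Hh. rewrite Rmult_0_r. apply IZR_le. lia.
  - apply (le_density_of_count_ge); [exact Hs|]. intros k x.
    replace (INR k * IZR h) with (IZR (Z.of_nat k * h)) by (rewrite mult_IZR, <- INR_IZR_INZ; ring).
    apply IZR_le, Hiter.
Qed.

Lemma increment_le_density_le (s : R) (h : Z) :
  (forall x, (i (x + s) - i x <= h)%Z) -> d * s <= IZR h.
Proof.
  intros Hh.
  assert (Hneg : IZR (- h) <= d * - s).
  { apply increment_ge_le_density. intro x. specialize (Hh (x + - s)).
    replace (x + - s + s) with x in Hh by ring. lia. }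
  rewrite opp_IZR, <- Ropp_mult_distr_r in Hneg. lra.
Qed.

Lemma almost_period_index_shift (e tau : R) :
  0 < e -> almost_period a e tau ->
  exists h : Z,
    (forall n, a n + tau - e <= a (n + h)%Z < a n + tau + 6 * e) /\
    d * (tau - e) <= IZR h <= d * (tau + 5 * e).
Proof.
  intros He Htau.
  destruct (almost_period_injections a e tau Htau) as (f & g & Hf & Hg & Hfclose & Hgclose).
  destruct (lower_index_shift f g tau e Hf Hg Hfclose Hgclose) as [h Hh].
  exists h. split; [exact (lower_index_shift_points tau e h He Hh)|]. split.
  - apply increment_le_density_le. intro x. specialize (Hh x).
    replace (x + (tau - e)) with (x + tau - e) by ring. lia.
  - apply increment_ge_le_density. intro x. specialize (Hh x).
    replace (x + (tau + 5 * e)) with (x + tau + 5 * e) by ring. lia.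
Qed.

Lemma almost_periodic_set_density_pos : almost_periodic_set a -> 0 < d.
Proof.
  intros [_ Hap].
  destruct (Hap 1 Rlt_0_1) as [L [HL Hrel]].
  destruct (Hrel 1) as [tau [Htau Htau_ap]].
  destruct (almost_period_index_shift 1 tau Rlt_0_1 Htau_ap)
    as [h [Hpoints [_ Hh]]].
  specialize (Hpoints 0%Z). rewrite Z.add_0_l in Hpoints.
  assert (Hhpos : (0 < h)%Z).
  { apply Z.nle_gt. intro Hle. pose proof (lower_index_monotone h 0 Hle). lra. }
  apply IZR_lt in Hhpos. nra.
Qed.

End LowerIndex.

Theorem theorem1 (a : Z -> R) (d : R) :
  almost_periodic_set a ->
  has_density a d ->
  (forall n : Z, a n <= a (n + 1)%Z) ->
  exists phi : Z -> R,
    (forall n : Z, a n = IZR n / d + phi n) /\ almost_periodic_map phi.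
Proof.
  intros Hset Hd Hstep.
  destruct (lower_index_exists a (proj1 Hset) Hstep) as [i Hi].
  pose proof (almost_periodic_set_density_pos a i Hi d Hd Hset) as Hdpos.
  exists (fun n => a n - IZR n / d). split; [intro n; ring|].
  intros eps Heps.
  set (e := eps / 8). assert (He : 0 < e) by (unfold e; lra).
  destruct (proj2 Hset e He) as [L [HL Hrel]].
  set (K := up (d * (L + 6 * e))).
  assert (HK : d * (L + 6 * e) < IZR K) by apply archimed.
  exists K. split.
  { apply lt_IZR. pose proof (Rmult_lt_0_compat d (L + 6 * e) Hdpos ltac:(lra)). lra. }
  intro m. destruct (Hrel (IZR m / d + e)) as [tau [Htau Htau_ap]].
  destruct (almost_period_index_shift a i Hi d Hd e tau He Htau_ap)
    as [h [Hpoints [Hh_lo Hh_hi]]].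
  assert (Hm : IZR m = d * (IZR m / d)) by (field; lra).
  exists h. split.
  - assert (Hmh : IZR m < IZR h) by nra.
    assert (HhK : IZR h < IZR (m + K)) by (rewrite plus_IZR; nra).
    apply lt_IZR in Hmh, HhK. lia.
  - exists (7 * e). split; [unfold e; lra|]. intro n.
    specialize (Hpoints n).
    assert (Hq : tau - e <= IZR h / d <= tau + 5 * e).
    { split; apply (Rmult_le_reg_l d); try lra;
        replace (d * (IZR h / d)) with (IZR h) by (field; lra); lra. }
    rewrite plus_IZR. apply Rabs_le.
    replace (a (n + h)%Z - (IZR n + IZR h) / d - (a n - IZR n / d))
      with (a (n + h)%Z - a n - IZR h / d) by (field; lra).
    lra.
Qed.
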